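(* Let $\mathbb{T}$ be a geometric theory over $\Sigma$. Then $\mathbf{M}_{\mathbb{T}}=(I_{\mathbb{T}}\rightrightarrows M_{\mathbb{T}})$ is a topological groupoid: the domain and codomain maps $d,c:I_{\mathbb{T}}\to M_{\mathbb{T}}$, the composition map $m:I_{\mathbb{T}}\times_{M_{\mathbb{T}}}I_{\mathbb{T}}\to I_{\mathbb{T}}$, the identity map $e:M_{\mathbb{T}}\to I_{\mathbb{T}}$ and the inverse map $i:I_{\mathbb{T}}\to I_{\mathbb{T}}$ are all continuous.
   Context: Let $\Sigma$ be a single-sorted first-order signature with equality, $\kappa\geq|\Sigma|+\aleph_0$ an infinite cardinal, and $\mathbb{S}$ a fixed set of cardinality at least $\kappa$. An $\mathbb{S}$-indexed $\Sigma$-structure is one whose underlying set is a quotient $A/{\sim}$ of a subset $A\subseteq\mathbb{S}$ (elements $[a]$). $M_\Sigma$ is the set of all such structures and $I_\Sigma$ the set of all isomorphisms between them, with domain and codomain maps $d,c$. The logical topology on $M_\Sigma$ is the coarsest containing the sets $\{\mathbf{M}:[a]\in\mathbf{M}\}$ ($a\in\mathbb{S}$), $\{\mathbf{M}:[\mathbf{a}]\in R^{\mathbf{M}}\}$ (each $n$-ary relation symbol $R$ including equality and nullary symbols), and $\{\mathbf{M}:f^{\mathbf{M}}([\mathbf{a}])=[b]\}$ (each function symbol $f$). The logical topology on $I_\Sigma$ is the coarsest making $d,c$ continuous and containing all $\{\mathbf{f}:[a]\in d(\mathbf{f}),[b]\in c(\mathbf{f}),\mathbf{f}([a])=[b]\}$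 ($a,b\in\mathbb{S}$). $M_{\mathbb{T}}\subseteq M_\Sigma$ is the set of $\mathbb{S}$-indexed $\mathbb{T}$-models and $I_{\mathbb{T}}\subseteq I_\Sigma$ the set of isomorphisms between them, with subspace topologies (the fibre product $I_{\mathbb{T}}\times_{M_{\mathbb{T}}}I_{\mathbb{T}}$ with its subspace-of-product topology). *)

From HB Require Import structures.
From mathcomp Require Import all_boot all_classical all_reals.
From mathcomp Require Import topology.

Set Implicit Arguments.
Set Strict Implicit.
Unset Printing Implicit Defensive.

Local Open Scope classical_set_scope.

(* Single-sorted first-order signatures (equality is built in).             *)
Record signature := Signature {
  funsym : Type;
  farity : funsym -> nat;
  relsym : Type;
  rarity : relsym -> nat
}.
Arguments farity {s} f.
Arguments rarity {s} R.

Definition card_geq (A B : Type) : Prop := exists f : B -> A, injective f.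

Section Syntax.
Variable sg : signature.

Inductive term : Type :=
  | TVar : nat -> term
  | TApp : forall f : funsym sg, ('I_(farity f) -> term) -> term.

Inductive gformula : Type :=
  | GTop : gformula
  | GEq : term -> term -> gformula
  | GRel : forall R : relsym sg, ('I_(rarity R) -> term) -> gformula
  | GAnd : gformula -> gformula -> gformula
  | GOr : forall I : Type, (I -> gformula) -> gformula   (* arbitrary disjunction; GOr False _ is falsum *)
  | GEx : nat -> gformula -> gformula.

Fixpoint occurs_term (i : nat) (t : term) : Prop :=
  match t with
  | TVar j => i = j
  | TApp f ts => exists k, occurs_term i (ts k)
  end.

Fixpoint free_in (i : nat) (phi : gformula) : Prop :=
  match phi with
  | GTop => False
  | GEq t u => occurs_term i t \/ occurs_term i u
  | GRel R ts => exists k, occurs_term i (ts k)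
  | GAnd p q => free_in i p \/ free_in i q
  | GOr _ ps => exists j, free_in i (ps j)
  | GEx x p => i <> x /\ free_in i p
  end.

(* A geometric sequent  phi |-_{x_0,...,x_{n-1}} psi  in context of the  *)
(* first [sctx] variables.                                              *)
Record sequent := Sequent {
  sctx : nat;
  shyp : gformula;
  sconc : gformula
}.

Definition sequent_wf (s : sequent) : Prop :=
  forall i, free_in i (shyp s) \/ free_in i (sconc s) -> (i < sctx s)%N.

Definition geometric_theory (T : set sequent) : Prop :=
  forall s, T s -> sequent_wf s.

End Syntax.

(* S-indexed structures: underlying set A/~ with A ⊆ S.  Elements [a] are   *)
(* represented by a ∈ A; [a] = [b] iff seqv a b.  Relations and functions   *)
(* are given on representatives and respect ~ ; sfun f as b means          *)
(* f([as]) = [b].                                                           *)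
Section Structures.
Variables (S : Type) (sg : signature).

Record structure := Structure {
  sdom : S -> Prop;
  seqv : S -> S -> Prop;
  srel : forall R : relsym sg, ('I_(rarity R) -> S) -> Prop;
  sfun : forall f : funsym sg, ('I_(farity f) -> S) -> S -> Prop;
  seqv_dom : forall a b, seqv a b -> sdom a;
  seqv_refl : forall a, sdom a -> seqv a a;
  seqv_sym : forall a b, seqv a b -> seqv b a;
  seqv_trans : forall a b c, seqv a b -> seqv b c -> seqv a c;
  srel_dom : forall R xs, srel R xs -> forall k, sdom (xs k);
  srel_resp : forall R xs ys, (forall k, seqv (xs k) (ys k)) ->
                srel R xs -> srel R ys;
  sfun_dom : forall f xs b, sfun f xs b -> (forall k, sdom (xs k)) /\ sdom b;
  sfun_resp : forall f xs ys b c, (forall k, seqv (xs k) (ys k)) -> seqv b c ->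
                sfun f xs b -> sfun f ys c;
  sfun_functional : forall f xs b c, sfun f xs b -> sfun f xs c -> seqv b c;
  sfun_total : forall f xs, (forall k, sdom (xs k)) -> exists b, sfun f xs b
}.

(* Isomorphisms f : M -> N, given by their graph on representatives:    *)
(* imap a b  means  [a] ∈ M, [b] ∈ N and f([a]) = [b].                  *)
Record iso := Iso {
  isrc : structure;
  itgt : structure;
  imap : S -> S -> Prop;
  imap_dom : forall a b, imap a b -> sdom isrc a /\ sdom itgt b;
  imap_resp : forall a a' b b', seqv isrc a a' -> seqv itgt b b' ->
                imap a b -> imap a' b';
  imap_functional : forall a b b', imap a b -> imap a b' -> seqv itgt b b';
  imap_total : forall a, sdom isrc a -> exists b, imap a b;
  imap_injective : forall a a' b, imap a b -> imap a' b -> seqv isrc a a';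
  imap_surjective : forall b, sdom itgt b -> exists a, imap a b;
  imap_rel : forall R xs ys, (forall k, imap (xs k) (ys k)) ->
               (srel isrc R xs <-> srel itgt R ys);
  imap_fun : forall f xs ys a b, (forall k, imap (xs k) (ys k)) -> imap a b ->
               sfun isrc f xs a -> sfun itgt f ys b
}.

Section Semantics.
Variables (M : structure) (v : nat -> S).

Fixpoint teval (t : term sg) (b : S) : Prop :=
  match t with
  | TVar i => seqv M (v i) b
  | TApp f ts => exists xs : 'I_(farity f) -> S,
                   (forall k, teval (ts k) (xs k)) /\ sfun M f xs b
  end.
End Semantics.

Definition update (v : nat -> S) (x : nat) (a : S) : nat -> S :=
  fun i => if i == x then a else v i.

Fixpoint sat (M : structure) (v : nat -> S) (phi : gformula sg) : Prop :=
  match phi with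
  | GTop => True
  | GEq t u => exists b, teval M v t b /\ teval M v u b
  | GRel R ts => exists xs, (forall k, teval M v (ts k) (xs k)) /\ srel M R xs
  | GAnd p q => sat M v p /\ sat M v q
  | GOr _ ps => exists j, sat M v (ps j)
  | GEx x p => exists a, sdom M a /\ sat M (update v x a) p
  end.

Definition sat_sequent (M : structure) (s : sequent sg) : Prop :=
  forall v : nat -> S, (forall i, (i < sctx s)%N -> sdom M (v i)) ->
    sat M v (shyp s) -> sat M v (sconc s).

Definition models (T : set (sequent sg)) : set structure :=
  [set M | forall s, T s -> sat_sequent M s].

Definition isos (T : set (sequent sg)) : set iso :=
  [set f | models T (isrc f) /\ models T (itgt f)].

Definition M_subbase : set (set structure) :=
  [set U | (exists a, U = [set M | sdom M a])
        \/ (exists R xs, U = [set M | srel M R xs])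
        \/ (exists a b, U = [set M | seqv M a b])
        \/ (exists f xs b, U = [set M | sfun M f xs b])].

End Structures.

Arguments M_subbase {S sg}.

HB.instance Definition _ (S : Type) (sg : signature) :=
  gen_eqMixin (structure S sg).
HB.instance Definition _ (S : Type) (sg : signature) :=
  gen_choiceMixin (structure S sg).
HB.instance Definition _ (S : Type) (sg : signature) :=
  @isSubBaseTopological.Build (structure S sg) (set (structure S sg))
    M_subbase id.

Definition I_subbase (S : Type) (sg : signature) : set (set (iso S sg)) :=
  [set U | (exists V : set (structure S sg), open V /\ U = (@isrc S sg) @^-1` V)
        \/ (exists V : set (structure S sg), open V /\ U = (@itgt S sg) @^-1` V)
        \/ (exists a b : S, U = [set f | imap f a b])].

HB.instance Definition _ (S : Type) (sg : signature) :=
  gen_eqMixin (iso S sg).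
HB.instance Definition _ (S : Type) (sg : signature) :=
  gen_choiceMixin (iso S sg).
HB.instance Definition _ (S : Type) (sg : signature) :=
  @isSubBaseTopological.Build (iso S sg) (set (iso S sg))
    (@I_subbase S sg) id.

Section GroupoidMaps.
Variables (S : Type) (sg : signature).

(* Pick the (unique) isomorphism with a prescribed domain, codomain and graph, *)
(* if it exists; otherwise return a default.                                  *)
Definition pick_iso (P : iso S sg -> Prop) (dflt : iso S sg) : iso S sg :=
  match pselect (exists h, P h) with
  | left H => projT1 (cid H)
  | right _ => dflt
  end.

(* composition m(g, f) = g ∘ f, defined on pairs with d g = c f *)
Definition iso_comp (p : iso S sg * iso S sg) : iso S sg :=
  pick_iso (fun h => isrc h = isrc p.2 /\ itgt h = itgt p.1 /\
     forall a c, imap h a c <-> exists b, imap p.2 a b /\ imap p.1 b c) p.1.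

Section IdIso.
Variable M : structure S sg.
Local Lemma sy a b : seqv M a b -> seqv M b a.
Proof. exact: (@seqv_sym S sg M a b). Qed.
Local Lemma tr a b c : seqv M a b -> seqv M b c -> seqv M a c.
Proof. exact: (@seqv_trans S sg M a b c). Qed.
Arguments sy {a b}.
Arguments tr {a b c}.

Lemma id_dom a b : seqv M a b -> sdom M a /\ sdom M b.
Proof.
move=> h; split; first exact: (@seqv_dom S sg M a b h).
exact: (@seqv_dom S sg M b a (sy h)).
Qed.
Lemma id_resp a a' b b' : seqv M a a' -> seqv M b b' -> seqv M a b -> seqv M a' b'.
Proof. by move=> h1 h2 h3; apply: tr h2; apply: tr h3; apply: sy. Qed.
Lemma id_functional a b b' : seqv M a b -> seqv M a b' -> seqv M b b'.
Proof. by move=> h1 h2; apply: tr h2; apply: sy. Qed.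
Lemma id_total a : sdom M a -> exists b, seqv M a b.
Proof. by move=> h; exists a; exact: (@seqv_refl S sg M _ h). Qed.
Lemma id_injective a a' b : seqv M a b -> seqv M a' b -> seqv M a a'.
Proof. by move=> h1 h2; apply: tr h1 _; apply: sy. Qed.
Lemma id_surjective b : sdom M b -> exists a, seqv M a b.
Proof. by move=> h; exists b; exact: (@seqv_refl S sg M _ h). Qed.
Lemma id_rel R xs ys : (forall k, seqv M (xs k) (ys k)) ->
  (srel M R xs <-> srel M R ys).
Proof.
move=> h; split=> H.
  exact: (@srel_resp S sg M R xs ys h H).
apply: (@srel_resp S sg M R ys xs _ H) => k; exact: sy.
Qed.
Lemma id_fun f xs ys a b : (forall k, seqv M (xs k) (ys k)) -> seqv M a b ->
  sfun M f xs a -> sfun M f ys b.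
Proof. by move=> h1 h2; apply: (@sfun_resp S sg M). Qed.

Definition iso_id : iso S sg :=
  @Iso S sg M M (seqv M) id_dom id_resp id_functional id_total id_injective
    id_surjective id_rel id_fun.
End IdIso.

Definition iso_inv (f : iso S sg) : iso S sg :=
  pick_iso (fun h => isrc h = itgt f /\ itgt h = isrc f /\
     forall a b, imap h a b <-> imap f b a) f.

Definition composable (T : set (sequent sg)) : set (iso S sg * iso S sg) :=
  [set p | isos T p.1 /\ isos T p.2 /\ isrc p.1 = itgt p.2].

End GroupoidMaps.

(* Both logical topologies are generated by subbases, so a map into them is
   continuous as soon as the preimage of every subbasic set is a neighbourhood
   of each of its points.  For d and c these preimages are subbasic by
   definition; e pulls [f [a] = [b]] back to the subbasic set [[a] = [b]] of
   models, since the graph of 1_M is ~_M; i exchanges d with c and [(a, b)]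
   with [(b, a)]; and m pulls [(g o f) [a] = [c]] back, around a given pair,
   to [f [a] = [b]] x [g [b] = [c]] for the intermediate [b]. *)

From HB Require Import structures.
From mathcomp Require Import all_boot all_classical all_reals.
From mathcomp Require Import topology.
From mathcomp Require Import finmap.
Set Implicit Arguments.
Unset Strict Implicit.
Unset Printing Implicit Defensive.

Local Open Scope classical_set_scope.

Section SubbaseTopology.
Variables (T : choiceType) (B : set_system T).

Definition subbase_topology : Type := T.
HB.instance Definition _ := Choice.on subbase_topology.
HB.instance Definition _ :=
  @isSubBaseTopological.Build subbase_topology (set T) B id.

Lemma subbase_open (A : set T) : B A -> @open subbase_topology A.
Proof.
by move=> BA; exists [set A]; [move=> _ ->; exact: finI_from1|rewrite bigcup_set1].
Qed.

Lemma subbase_nbhs (A : set T) (x : subbase_topology) : B A -> A x -> nbhs x A.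
Proof. by move=> BA Ax; apply: open_nbhs_nbhs; split=> //; exact: subbase_open. Qed.

(* Every neighbourhood of [f x] contains a finite intersection of subbasic
   sets around [f x], and [nbhs x] is closed under finite intersections. *)
Lemma continuous_subbase (X : topologicalType) (f : X -> subbase_topology) :
  (forall A, B A -> forall x, A (f x) -> nbhs x (f @^-1` A)) -> continuous f.
Proof.
move=> fB x W [_ [[D DB <-] [A DA Afx] AW]].
have [E EB EA] : exists2 E : {fset set T}, {subset E <= B} & \bigcap_(U in [set` E]) U = A.
  by have [E] := DB A DA; exists E.
have : nbhs x (\bigcap_(U in [set` E]) f @^-1` U).
  apply: filter_bigI => U EU; apply: fB; first by move/EB: EU; rewrite in_setE.
  by move: Afx; rewrite /= -EA; apply.
apply: filterS => y Ey; apply: AW; exists A => //=; rewrite -EA => U EU; exact: Ey.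
Qed.

End SubbaseTopology.

(* The logical topologies on structures and on isomorphisms are, up to
   conversion, [subbase_topology M_subbase] and [subbase_topology I_subbase]. *)
Section LogicalTopologies.
Variables (S : Type) (sg : signature).

Lemma M_subbase_open (U : set (structure S sg)) : M_subbase U -> open U.
Proof. exact: (@subbase_open _ M_subbase). Qed.

Lemma M_subbase_nbhs (U : set (structure S sg)) M : M_subbase U -> U M -> nbhs M U.
Proof. exact: (@subbase_nbhs _ M_subbase). Qed.

Lemma I_subbase_nbhs (U : set (iso S sg)) f : I_subbase U -> U f -> nbhs f U.
Proof. exact: (@subbase_nbhs _ (@I_subbase S sg)). Qed.

Lemma continuous_into_structures (X : topologicalType) (F : X -> structure S sg) :
  (forall U, M_subbase U -> forall x, U (F x) -> nbhs x (F @^-1` U)) -> continuous F.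
Proof. exact: (@continuous_subbase _ M_subbase). Qed.

Lemma continuous_into_isos (X : topologicalType) (F : X -> iso S sg) :
  (forall U, I_subbase U -> forall x, U (F x) -> nbhs x (F @^-1` U)) -> continuous F.
Proof. exact: (@continuous_subbase _ (@I_subbase S sg)). Qed.

Lemma isrc_preimage_nbhs (V : set (structure S sg)) f :
  open V -> V (isrc f) -> nbhs f (@isrc S sg @^-1` V).
Proof. by move=> oV Vf; apply: I_subbase_nbhs => //; left; exists V. Qed.

Lemma itgt_preimage_nbhs (V : set (structure S sg)) f :
  open V -> V (itgt f) -> nbhs f (@itgt S sg @^-1` V).
Proof. by move=> oV Vf; apply: I_subbase_nbhs => //; right; left; exists V. Qed.

Lemma imap_nbhs a b f : imap f a b -> nbhs f [set g | @imap S sg g a b].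
Proof. by move=> fab; apply: I_subbase_nbhs => //; right; right; exists a, b. Qed.

Lemma continuous_isrc : continuous (@isrc S sg).
Proof.
apply: continuous_into_structures => U BU f Uf.
by apply: isrc_preimage_nbhs => //; exact: M_subbase_open.
Qed.

Lemma continuous_itgt : continuous (@itgt S sg).
Proof.
apply: continuous_into_structures => U BU f Uf.
by apply: itgt_preimage_nbhs => //; exact: M_subbase_open.
Qed.

End LogicalTopologies.

Arguments seqv_refl {S sg s a}.
Arguments sfun_dom {S sg s f xs b}.
Arguments sfun_resp {S sg s f xs ys b c}.
Arguments sfun_functional {S sg s f xs b c}.
Arguments imap_dom {S sg i a b}.
Arguments imap_resp {S sg i a a' b b'}.
Arguments imap_functional {S sg i a b b'}.
Arguments imap_injective {S sg i a a' b}.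
Arguments imap_fun {S sg i f xs ys a b}.

Section Isomorphisms.
Variables (S : Type) (sg : signature).
Implicit Types (f g : iso S sg) (a b c : S).

Lemma imap_respl f a a' b : seqv (isrc f) a a' -> imap f a b -> imap f a' b.
Proof.
move=> aa' fab; apply: (imap_resp aa' _ fab).
exact/seqv_refl/(imap_dom fab).2.
Qed.

Lemma imap_respr f a b b' : seqv (itgt f) b b' -> imap f a b -> imap f a b'.
Proof.
move=> bb' fab; apply: (imap_resp _ bb' fab).
exact/seqv_refl/(imap_dom fab).1.
Qed.

Section Inverse.
Variable f : iso S sg.

Let graph a b := imap f b a.

Lemma inverse_dom a b : graph a b -> sdom (itgt f) a /\ sdom (isrc f) b.
Proof. by move=> /imap_dom []. Qed.

Lemma inverse_resp a a' b b' : seqv (itgt f) a a' -> seqv (isrc f) b b' ->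
  graph a b -> graph a' b'.
Proof. by move=> aa' bb'; apply: imap_resp. Qed.

Lemma inverse_functional a b b' : graph a b -> graph a b' -> seqv (isrc f) b b'.
Proof. exact: imap_injective. Qed.

Lemma inverse_total a : sdom (itgt f) a -> exists b, graph a b.
Proof. exact: imap_surjective f a. Qed.

Lemma inverse_injective a a' b : graph a b -> graph a' b -> seqv (itgt f) a a'.
Proof. exact: imap_functional. Qed.

Lemma inverse_surjective b : sdom (isrc f) b -> exists a, graph a b.
Proof. exact: imap_total f b. Qed.

Lemma inverse_rel R xs ys : (forall k, graph (xs k) (ys k)) ->
  (srel (itgt f) R xs <-> srel (isrc f) R ys).
Proof. by move=> xy; rewrite (imap_rel f R ys xs xy). Qed.

(* [f] sends the value [c] of [F ys] to a value of [F xs], hence to [a]; by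
   injectivity of [f], [c] is [b]. *)
Lemma inverse_fun F xs ys a b : (forall k, graph (xs k) (ys k)) -> graph a b ->
  sfun (itgt f) F xs a -> sfun (isrc f) F ys b.
Proof.
move=> xy fba Fxa.
have ys_dom k : sdom (isrc f) (ys k) by have [] := imap_dom (xy k).
have [c Fyc] := sfun_total (isrc f) F ys ys_dom.
have [a' fca'] := imap_total f c (sfun_dom Fyc).2.
have fca : imap f c a.
  exact: imap_respr (sfun_functional (imap_fun xy fca' Fyc) Fxa) fca'.
apply: (sfun_resp _ (imap_injective fca fba) Fyc) => k.
exact/seqv_refl/ys_dom.
Qed.

Definition inverse_iso : iso S sg :=
  @Iso S sg (itgt f) (isrc f) graph inverse_dom inverse_resp inverse_functional
    inverse_total inverse_injective inverse_surjective inverse_rel inverse_fun.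

End Inverse.

Section Composite.
Variables g f : iso S sg.
Hypothesis gf : isrc g = itgt f.

Let graph a c := exists b, imap f a b /\ imap g b c.

Lemma composite_dom a c : graph a c -> sdom (isrc f) a /\ sdom (itgt g) c.
Proof. by move=> [b [/imap_dom [? _] /imap_dom [_ ?]]]. Qed.

Lemma composite_resp a a' c c' : seqv (isrc f) a a' -> seqv (itgt g) c c' ->
  graph a c -> graph a' c'.
Proof.
by move=> aa' cc' [b [fab gbc]]; exists b; split;
  [exact: imap_respl aa' fab | exact: imap_respr cc' gbc].
Qed.

Lemma composite_functional a c c' : graph a c -> graph a c' -> seqv (itgt g) c c'.
Proof.
move=> [b [fab gbc]] [b' [fab' gbc']].
have bb' : seqv (isrc g) b b' by rewrite gf; exact: imap_functional fab fab'.
exact: imap_functional (imap_respl bb' gbc) gbc'.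
Qed.

Lemma composite_total a : sdom (isrc f) a -> exists c, graph a c.
Proof.
move=> /(imap_total f) [b fab].
have [c gbc] : exists c, imap g b c by apply: imap_total; rewrite gf; case: (imap_dom fab).
by exists c, b.
Qed.

Lemma composite_injective a a' c : graph a c -> graph a' c -> seqv (isrc f) a a'.
Proof.
move=> [b [fab gbc]] [b' [fab' gbc']].
have b'b : seqv (itgt f) b' b by rewrite -gf; exact: imap_injective gbc' gbc.
exact: imap_injective fab (imap_respr b'b fab').
Qed.

Lemma composite_surjective c : sdom (itgt g) c -> exists a, graph a c.
Proof.
move=> /(imap_surjective g) [b gbc].
have [a fab] : exists a, imap f a b by apply: imap_surjective; rewrite -gf; case: (imap_dom gbc).
by exists a, b.
Qed.

Lemma composite_rel R xs zs : (forall k, graph (xs k) (zs k)) ->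
  (srel (isrc f) R xs <-> srel (itgt g) R zs).
Proof.
move=> /choice [ys xyz].
rewrite (imap_rel f R xs ys (fun k => (xyz k).1)) -gf.
exact: imap_rel g R ys zs (fun k => (xyz k).2).
Qed.

Lemma composite_fun F xs zs a c : (forall k, graph (xs k) (zs k)) -> graph a c ->
  sfun (isrc f) F xs a -> sfun (itgt g) F zs c.
Proof.
move=> /choice [ys xyz] [b [fab gbc]] Fxa.
have Fyb := imap_fun (fun k => (xyz k).1) fab Fxa.
by rewrite -gf in Fyb; exact: imap_fun (fun k => (xyz k).2) gbc Fyb.
Qed.

Definition composite_iso : iso S sg :=
  @Iso S sg (isrc f) (itgt g) graph composite_dom composite_resp
    composite_functional composite_total composite_injective composite_surjective
    composite_rel composite_fun.

End Composite.

Lemma iso_inv_spec f : isrc (iso_inv f) = itgt f /\ itgt (iso_inv f) = isrc f /\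
  forall a b, imap (iso_inv f) a b <-> imap f b a.
Proof.
rewrite /iso_inv /pick_iso; case: pselect => [ex|[]]; first exact: projT2 (cid ex).
by exists (inverse_iso f).
Qed.

Lemma isrc_iso_inv f : isrc (iso_inv f) = itgt f.
Proof. by case: (iso_inv_spec f). Qed.

Lemma itgt_iso_inv f : itgt (iso_inv f) = isrc f.
Proof. by case: (iso_inv_spec f) => _ []. Qed.

Lemma imap_iso_inv f a b : imap (iso_inv f) a b <-> imap f b a.
Proof. by case: (iso_inv_spec f) => _ []. Qed.

Section CompositeSpec.
Variable p : iso S sg * iso S sg.
Hypothesis p_comp : isrc p.1 = itgt p.2.

Lemma iso_comp_spec :
  isrc (iso_comp p) = isrc p.2 /\ itgt (iso_comp p) = itgt p.1 /\
  forall a c, imap (iso_comp p) a c <-> exists b, imap p.2 a b /\ imap p.1 b c.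
Proof.
rewrite /iso_comp /pick_iso; case: pselect => [ex|[]]; first exact: projT2 (cid ex).
by exists (composite_iso p_comp).
Qed.

Lemma isrc_iso_comp : isrc (iso_comp p) = isrc p.2.
Proof. by case: iso_comp_spec. Qed.

Lemma itgt_iso_comp : itgt (iso_comp p) = itgt p.1.
Proof. by case: iso_comp_spec => _ []. Qed.

Lemma imap_iso_comp a c :
  imap (iso_comp p) a c <-> exists b, imap p.2 a b /\ imap p.1 b c.
Proof. by case: iso_comp_spec => _ []. Qed.

End CompositeSpec.

End Isomorphisms.

Section GroupoidStructure.
Variables (S : Type) (sg : signature).

Lemma continuous_iso_id : continuous (@iso_id S sg).
Proof.
apply: continuous_into_isos => _ [[V [oV ->]] | [[V [oV ->]] | [a [b ->]]]] M VM.
- exact: open_nbhs_nbhs.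
- exact: open_nbhs_nbhs.
- by apply: M_subbase_nbhs VM; right; right; left; exists a, b.
Qed.

Lemma continuous_iso_inv : continuous (@iso_inv S sg).
Proof.
apply: continuous_into_isos => _ [[V [oV ->]] | [[V [oV ->]] | [a [b ->]]]] f /=.
- rewrite isrc_iso_inv => Vf.
  by apply: filterS (itgt_preimage_nbhs oV Vf) => g; rewrite /= isrc_iso_inv.
- rewrite itgt_iso_inv => Vf.
  by apply: filterS (isrc_preimage_nbhs oV Vf) => g; rewrite /= itgt_iso_inv.
- move=> /imap_iso_inv fba.
  by apply: filterS (imap_nbhs fba) => g /imap_iso_inv.
Qed.

Lemma continuous_iso_comp (T : set (sequent sg)) :
  {within composable T, continuous (@iso_comp S sg)}.
Proof.
apply: continuous_into_isos => U BU p Up.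
case: (nbhs_subspaceP (composable T) p) => [[_ [_ p_comp]] | _]; last by move=> q /= ->.
case: BU Up => [[V [oV ->]] | [[V [oV ->]] | [a [c ->]]]] /=.
- rewrite isrc_iso_comp // => Vp; exists (setT, @isrc S sg @^-1` V).
    by split; [exact: filterT | exact: isrc_preimage_nbhs].
  by move=> q [_ Vq] [_ [_ q_comp]] /=; rewrite isrc_iso_comp.
- rewrite itgt_iso_comp // => Vp; exists (@itgt S sg @^-1` V, setT).
    by split; [exact: itgt_preimage_nbhs | exact: filterT].
  by move=> q [Vq _] [_ [_ q_comp]] /=; rewrite itgt_iso_comp.
- move=> /(imap_iso_comp p_comp) [b [fab gbc]].
  exists ([set g | imap g b c], [set f | imap f a b]).
    by split; exact: imap_nbhs.
  by move=> q [gbc' fab'] [_ [_ q_comp]] /=; apply/imap_iso_comp => //; exists b.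
Qed.

Variable T : set (sequent sg).

Lemma isos_iso_id M : models T M -> isos T (@iso_id S sg M).
Proof. by []. Qed.

Lemma isos_iso_inv f : isos T f -> isos T (@iso_inv S sg f).
Proof. by move=> [Tsrc Ttgt]; rewrite /isos /= isrc_iso_inv itgt_iso_inv. Qed.

Lemma isos_iso_comp p : composable T p -> isos T (@iso_comp S sg p).
Proof.
move=> [[_ Tg] [[Tf _] p_comp]].
by rewrite /isos /= isrc_iso_comp // itgt_iso_comp.
Qed.

End GroupoidStructure.

Theorem lemma2p5 (sg : signature) (kappa S : Type)
  (kappa_inf : card_geq kappa nat)
  (kappa_sig : card_geq kappa (funsym sg + relsym sg)%type)
  (S_kappa : card_geq S kappa)
  (T : set (sequent sg)) (HT : geometric_theory T) :
  (* d *)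
  ((@isrc S sg) @` isos T `<=` models T /\ {within isos T, continuous (@isrc S sg)}) /\
  (* c *)
  ((@itgt S sg) @` isos T `<=` models T /\ {within isos T, continuous (@itgt S sg)}) /\
  (* m *)
  ((@iso_comp S sg) @` composable T `<=` isos T /\
     {within composable T, continuous (@iso_comp S sg)}) /\
  (* e *)
  ((@iso_id S sg) @` models T `<=` isos T /\
     {within models T, continuous (@iso_id S sg)}) /\
  (* i *)
  ((@iso_inv S sg) @` isos T `<=` isos T /\
     {within isos T, continuous (@iso_inv S sg)}).
Proof.
split; first by split; [move=> _ [f [Tf _] <-] | exact/continuous_subspaceT/continuous_isrc].
split; first by split; [move=> _ [f [_ Tf] <-] | exact/continuous_subspaceT/continuous_itgt].
split; first by split; [move=> _ [p /isos_iso_comp ? <-] | exact: continuous_iso_comp].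
split; first by split; [move=> _ [M /isos_iso_id ? <-] | exact/continuous_subspaceT/continuous_iso_id].
by split; [move=> _ [f /isos_iso_inv ? <-] | exact/continuous_subspaceT/continuous_iso_inv].
Qed.
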